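(* Let $M$ be a $\bar{\mathfrak D}$-module (not necessarily a weight module) on which the subalgebra $\bar{\mathfrak D}^{+}$ acts locally finitely. Then: (i) $M$ contains a nonzero vector $v$ such that $\bar{\mathfrak D}^{+}v\subseteq\mathbb Cv$; (ii) if $M$ is simple, then $M$ is a Whittaker module or a highest weight module.
   Context: $\bar{\mathfrak D}$ is the Lie algebra with basis $\{d_m,h_r,\bar c_1,\bar c_2,\bar c_3:m,r\in\mathbb Z\}$, brackets $[d_m,d_n]=(m-n)d_{m+n}+\delta_{m+n,0}\frac{m^3-m}{12}\bar c_1$, $[d_m,h_r]=-rh_{m+r}+\delta_{m+r,0}(m^2+m)\bar c_2$, $[h_r,h_s]=r\delta_{r+s,0}\bar c_3$, with $\bar c_i$ central. $\bar{\mathfrak D}^{\pm}=\bigoplus_{n\ge1}(\mathbb Cd_{\pm n}\oplus\mathbb Ch_{\pm n})$ and $\bar{\mathfrak D}^0=\mathbb Cd_0\oplus\mathbb Ch_0\oplus\mathbb C\bar c_1\oplus\mathbb C\bar c_2\oplus\mathbb C\bar c_3$. $\bar{\mathfrak D}^+$ acts locally finitely on $M$ if every vector of $M$ lies in a finite-dimensional $\bar{\mathfrak D}^+$-submodule. A Whittaker module is a module generated by a nonzero vector $v$ with $xv=\varphi(x)v$ for all $x\in\bar{\mathfrak D}^+$, for some Lie algebra homomorphism $\varphi:\bar{\mathfrak D}^+\to\mathbb C$; a highest weight module is a module generated by a nonzero vector $v$ with $\bar{\mathfrak D}^+v=0$ and $\bar{\mathfrak D}^0v\subseteq\mathbb Cv$.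 *)

From HB Require Import structures.
From mathcomp Require Import all_boot all_order all_algebra.
From mathcomp Require Import complex reals.
Set Implicit Arguments. Unset Strict Implicit. Unset Printing Implicit Defensive.
Import Order.TTheory GRing.Theory Num.Theory.
Local Open Scope ring_scope.

(* The Lie algebra \bar D has basis {d_m, h_r, c1, c2, c3 : m r in Z}.
   A \bar D-module structure on a vector space M over a field F is the same
   thing as a family of linear operators indexed by that basis satisfying
   the bracket relations as commutators ([x,y] v = x (y v) - y (x v)). *)

Section Dbar.
Variable F : fieldType.
Variable M : lmodType F.

Definition delta0 (k : int) : F := (k == 0)%:R.

Record DbarModule := {
  dop : int -> {linear M -> M};
  hop : int -> {linear M -> M};
  c1op : {linear M -> M};
  c2op : {linear M -> M};
  c3op : {linear M -> M};
  dd_rel : forall (m n : int) (v : M),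
    dop m (dop n v) - dop n (dop m v)
    = (m - n)%:~R *: dop (m + n) v
      + (delta0 (m + n) * ((m ^+ 3 - m)%:~R / 12%:R)) *: c1op v;
  dh_rel : forall (m r : int) (v : M),
    dop m (hop r v) - hop r (dop m v)
    = (- r)%:~R *: hop (m + r) v
      + (delta0 (m + r) * (m ^+ 2 + m)%:~R) *: c2op v;
  hh_rel : forall (r s : int) (v : M),
    hop r (hop s v) - hop s (hop r v) = (r%:~R * delta0 (r + s)) *: c3op v;
  c1_central : (forall m v, c1op (dop m v) = dop m (c1op v))
            /\ (forall r v, c1op (hop r v) = hop r (c1op v))
            /\ (forall v, c1op (c2op v) = c2op (c1op v))
            /\ (forall v, c1op (c3op v) = c3op (c1op v));
  c2_central : (forall m v, c2op (dop m v) = dop m (c2op v))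
            /\ (forall r v, c2op (hop r v) = hop r (c2op v))
            /\ (forall v, c2op (c3op v) = c3op (c2op v));
  c3_central : (forall m v, c3op (dop m v) = dop m (c3op v))
            /\ (forall r v, c3op (hop r v) = hop r (c3op v))
}.

Variable A : DbarModule.

Definition in_line (v w : M) : Prop := exists a : F, w = a *: v.

Definition in_span (ws : seq M) (x : M) : Prop :=
  exists a : 'I_(size ws) -> F, x = \sum_(i < size ws) a i *: ws`_i.

(* \bar D^+ = span{d_n, h_n : n >= 1} acts locally finitely: every vector
   lies in a finite-dimensional (finitely spanned) \bar D^+-stable subspace *)
Definition Dplus_locally_finite : Prop :=
  forall v : M, exists ws : seq M,
    in_span ws v /\
    forall w, w \in ws -> forall n : int, (0 < n)%R ->
      in_span ws (dop A n w) /\ in_span ws (hop A n w).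

Definition Dplus_stable_line (v : M) : Prop :=
  forall n : int, (0 < n)%R -> in_line v (dop A n v) /\ in_line v (hop A n v).

Definition submodule (S : M -> Prop) : Prop :=
  [/\ S 0, (forall x y, S x -> S y -> S (x + y)),
      (forall (a : F) x, S x -> S (a *: x)),
      (forall m x, S x -> S (dop A m x) /\ S (hop A m x))
    & (forall x, S x -> S (c1op A x) /\ S (c2op A x) /\ S (c3op A x))].

Definition generated_by (v : M) : Prop :=
  forall S, submodule S -> S v -> forall x, S x.

Definition simple_module : Prop :=
  (exists x : M, x != 0) /\
  forall S, submodule S -> (exists x, S x /\ x != 0) -> forall x, S x.

(* Lie algebra homomorphisms phi : \bar D^+ -> C, given by their values
   phi(d_n) = phid n, phi(h_n) = phih n (n >= 1).  Since C is abelian, the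
   condition is phi([x,y]) = 0 for all basis elements x, y of \bar D^+:
   [d_m,d_n] = (m-n) d_{m+n}, [d_m,h_r] = -r h_{m+r}, [h_r,h_s] = 0 (m,n,r,s >= 1). *)
Definition Dplus_hom (phid phih : int -> F) : Prop :=
  (forall m n : int, (0 < m)%R -> (0 < n)%R -> (m - n)%:~R * phid (m + n) = 0)
  /\ (forall m r : int, (0 < m)%R -> (0 < r)%R -> (- r)%:~R * phih (m + r) = 0).

Definition whittaker_module : Prop :=
  exists (v : M) (phid phih : int -> F),
    [/\ v != 0, Dplus_hom phid phih,
        (forall n : int, (0 < n)%R -> dop A n v = phid n *: v /\ hop A n v = phih n *: v)
      & generated_by v].

Definition highest_weight_module : Prop :=
  exists v : M,
    [/\ v != 0,
        (forall n : int, (0 < n)%R -> dop A n v = 0 /\ hop A n v = 0),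
        [/\ in_line v (dop A 0 v), in_line v (hop A 0 v), in_line v (c1op A v),
            in_line v (c2op A v) & in_line v (c3op A v)]
      & generated_by v].

End Dbar.

(* Take a finite-dimensional D^+-stable subspace V containing a nonzero vector;
   in a basis of V the operators d_n, h_n (n >= 1) become matrices satisfying
   the bracket relations of D^+.  Since V is finite-dimensional, d_1, ..., d_N
   are linearly dependent for large N, and bracketing such a relation with d_a
   strips off its lowest term d_a, so some d_k vanishes on V; then [d_k, d_m]
   and [d_k, h_m] force d_n = h_n = 0 on V for all large n.  Listed as
   d_1, h_1, d_2, h_2, ..., the operators have the property that the bracket of
   the i-th one with anything is a multiple of a later one.  Hence if all
   operators after the k-th act by scalars, the k-th commutes with all of them
   (a commutator equal to a scalar has trace 0, so it vanishes in characteristic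
   0), and restricting to one of its eigenspaces makes it a scalar as well;
   descending to k = 0 gives a common eigenvector.  In a simple module that
   eigenvector generates, so the module is a Whittaker module. *)

From HB Require Import structures.
From mathcomp Require Import all_boot all_order all_algebra.
From mathcomp Require Import complex reals.
From mathcomp Require Import zify.
From Stdlib Require Import ClassicalEpsilon.
Import Order.TTheory GRing.Theory Num.Theory.
Set Implicit Arguments. Unset Strict Implicit. Unset Printing Implicit Defensive.
Local Open Scope ring_scope.

Lemma commutator_scalar_eq0 (F : numDomainType) n (A B : 'M[F]_n) a :
  (0 < n)%N -> A *m B - B *m A = a%:M -> a = 0.
Proof.
move=> n_gt0 /(congr1 mxtrace); rewrite raddfB /= mxtrace_mulC subrr mxtrace_scalar.
by move/esym/eqP; rewrite mulrn_eq0 eqn0Ngt n_gt0 => /eqP.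
Qed.

Definition ascending_brackets (R : pzRingType) n (X : nat -> 'M[R]_n) :=
  forall i j, exists l c, (i < l)%N /\ X i *m X j - X j *m X i = c *: X l.

Section AscendingBrackets.
Variable F : numClosedFieldType.

Lemma ascending_brackets_central n (X : nat -> 'M[F]_n) k :
  (0 < n)%N -> ascending_brackets X -> (forall i, (k < i)%N -> is_scalar_mx (X i)) ->
  forall j, comm_mx (X k) (X j).
Proof.
move=> n_gt0 ascX scalX j; have [l [c [lt_kl XkXj]]] := ascX k j.
have /is_scalar_mxP[b Xl] := scalX l lt_kl.
move: XkXj; rewrite Xl scale_scalar_mx => XkXj.
by apply/eqP; rewrite -subr_eq0 XkXj (commutator_scalar_eq0 n_gt0 XkXj) raddf0.
Qed.

Lemma ascending_brackets_restrict n (X : nat -> 'M[F]_n) (E : 'M[F]_n) :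
  (forall i, stablemx E (X i)) -> ascending_brackets X ->
  ascending_brackets (fun i => restrictmx E (X i)).
Proof.
move=> stabE ascX i j; have [l [c [lt_il XiXj]]] := ascX i j.
exists l, c; split => //.
rewrite -!conjmxM ?inE ?stablemx_row_base // /conjmx -mulmxBl -mulmxBr XiXj.
by rewrite -scalemxAr -scalemxAl.
Qed.

Lemma restrictmx_eigenspace n (A : 'M[F]_n) a :
  restrictmx (eigenspace A a) A = a%:M.
Proof.
have /eigenspaceP EA : (row_base (eigenspace A a) <= eigenspace A a)%MS.
  by rewrite eq_row_base.
by rewrite /conjmx EA -scalemxAl mulmxVp ?row_base_free // scalemx1.
Qed.

Theorem ascending_brackets_common_eigenvector n (X : nat -> 'M[F]_n) N :
  (0 < n)%N -> ascending_brackets X -> (forall i, (N <= i)%N -> X i = 0) ->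
  exists2 v : 'rV_n, v != 0 & forall i, stablemx v (X i).
Proof.
move=> n_gt0 ascX XN.
suff : forall k n (X : nat -> 'M[F]_n), (0 < n)%N -> ascending_brackets X ->
    (forall i, (k <= i)%N -> is_scalar_mx (X i)) ->
    exists2 v : 'rV_n, v != 0 & forall i, stablemx v (X i).
  by apply=> // i /XN ->; apply/is_scalar_mxP; exists 0; rewrite raddf0.
move=> {n_gt0 ascX XN}; elim=> [|k IHk] {}n {}X n_gt0 ascX scalX.
  exists 'e_(Ordinal n_gt0).
    apply/eqP => /rowP/(_ (Ordinal n_gt0)).
    by rewrite !mxE !eqxx => /eqP; rewrite oner_eq0.
  by move=> i; have /is_scalar_mxP[a ->] := scalX i isT; apply: stablemxC.
have [a /negbTE Ea_neq0] := eigenvalue_closed (X k) n_gt0.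
set E := eigenspace (X k) a.
have stabE i : stablemx E (X i).
  by apply: comm_mx_stable_eigenspace; apply: ascending_brackets_central.
have [v v_neq0 stab_v] : exists2 v : 'rV_(\rank E), v != 0 &
    forall i, stablemx v (restrictmx E (X i)).
  apply: IHk; first by rewrite lt0n mxrank_eq0 Ea_neq0.
    exact: ascending_brackets_restrict.
  move=> i; rewrite leq_eqVlt => /orP[/eqP <- | lt_ki].
    by rewrite restrictmx_eigenspace scalar_mx_is_scalar.
  have /is_scalar_mxP[b ->] := scalX i lt_ki.
  by rewrite conjmx_scalar ?row_base_free ?scalar_mx_is_scalar.
exists (v *m row_base E); first by rewrite mulmx_free_eq0 ?row_base_free.
by move=> i; rewrite -stablemx_restrict.
Qed.

End AscendingBrackets.

Lemma matrices_dependent (F : fieldType) n (Y : nat -> 'M[F]_n) :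
  exists2 c : nat -> F, (exists2 i, (i <= n * n)%N & c i != 0) &
    \sum_(i < (n * n).+1) c i *: Y i = 0.
Proof.
set X := [tuple Y i | i < (n * n).+1].
have /freeP X_dep : ~~ free X.
  rewrite /free size_tuple ltn_eqF // ltnS; apply: leq_trans (dimvS (subvf _)) _.
  by rewrite dimvf dim_matrix.
have [k not_free_k] := not_all_ex_not _ _ X_dep.
have [Xk0 /not_all_ex_not[i ki_neq0]] := imply_to_and _ _ not_free_k.
exists (fun j => k (inord j)).
  by exists i; [rewrite -ltnS | rewrite inord_val; apply/eqP].
by apply: etrans Xk0; apply: eq_bigr => j _; rewrite inord_val nth_mktuple.
Qed.

Section DplusMatrices.
Variables (F : numFieldType) (n : nat).

(* Matrices act on row vectors from the right, so the matrix of x \o y is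
   Y *m X: these are the relations of D^+ with the brackets reversed. *)
Definition Dplus_antirep (D H : nat -> 'M[F]_n) : Prop :=
  [/\ forall a b, (0 < a)%N -> (0 < b)%N ->
        D a *m D b - D b *m D a = (b%:R - a%:R) *: D (a + b)%N,
      forall a b, (0 < a)%N -> (0 < b)%N ->
        D a *m H b - H b *m D a = b%:R *: H (a + b)%N
    & forall a b, (0 < a)%N -> (0 < b)%N -> comm_mx (H a) (H b)].

Variables D H : nat -> 'M[F]_n.
Hypothesis DH : Dplus_antirep D H.

Lemma Dplus_antirep_relation_vanish l a (c : nat -> F) :
  (0 < a)%N -> (exists2 i, (i <= l)%N & c i != 0) ->
  \sum_(i < l.+1) c i *: D (a + i)%N = 0 -> exists2 j, (0 < j)%N & D j = 0.
Proof.
have [DD _ _] := DH.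
elim: l a c => [|l IHl] a c a_gt0 [i le_il ci_neq0] rel.
  move: le_il ci_neq0 rel; rewrite leqn0 big_ord1 addn0 => /eqP-> ci_neq0 /eqP.
  by rewrite scaler_eq0 (negbTE ci_neq0) => /eqP Da0; exists a.
(* Bracketing with D a kills the first term and rescales the i-th by -i. *)
have := congr1 (fun Y => Y *m D a - D a *m Y) rel.
rewrite mulmx_suml mulmx_sumr -sumrB mul0mx mulmx0 subrr.
under eq_bigr => j _ do
  rewrite -scalemxAl -scalemxAr -scalerBr DD ?addn_gt0 ?a_gt0 // scalerA.
rewrite big_ord_recl addn0 subrr mulr0 scale0r add0r => rel'.
have [/existsP[j cj_neq0] | /existsPn c_eq0] := boolP [exists j : 'I_l.+1, c j.+1 != 0].
  apply: (IHl (a.+1 + a)%N (fun j => c j.+1 * (a%:R - (a + j.+1)%:R))) => //.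
    exists j; first by rewrite -ltnS.
    by rewrite mulf_neq0 // subr_eq0 eqr_nat -{1}[a]addn0 eqn_add2l.
  by apply: etrans rel'; apply: eq_bigr => k _; rewrite lift0 addnS !addSn addnAC.
exists a => //; apply/eqP; move: rel; rewrite big_ord_recl big1 => [|j _].
  rewrite addr0 addn0 => /eqP; rewrite scaler_eq0 => /orP[/eqP c0|//].
  case: i le_il ci_neq0 => [|i] le_il; first by rewrite c0 eqxx.
  by have /negPn/eqP -> := c_eq0 (Ordinal le_il); rewrite eqxx.
by have /negPn/eqP -> := c_eq0 j; rewrite scale0r.
Qed.

Lemma Dplus_antirep_eventually_zero :
  exists N, forall j, (N <= j)%N -> D j = 0 /\ H j = 0.
Proof.
have [DD DH' _] := DH.
have [c c_neq0 rel] := matrices_dependent (fun i => D (1 + i)%N).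
have [k k_gt0 Dk0] := Dplus_antirep_relation_vanish (a := 1) isT c_neq0 rel.
exists k.*2.+1 => j le_j; have jk_gt0 : (0 < j - k)%N by lia.
have jE : (k + (j - k))%N = j by lia.
split; apply/eqP.
  have := DD k (j - k)%N k_gt0 jk_gt0.
  rewrite Dk0 mul0mx mulmx0 subrr jE => /esym/eqP.
  by rewrite scaler_eq0 subr_eq0 eqr_nat => /orP[/eqP|//]; lia.
have := DH' k (j - k)%N k_gt0 jk_gt0.
rewrite Dk0 mul0mx mulmx0 subrr jE => /esym/eqP.
by rewrite scaler_eq0 pnatr_eq0 => /orP[/eqP|//]; lia.
Qed.

Definition Dplus_family (i : nat) : 'M[F]_n :=
  if odd i then H (i./2).+1 else D (i./2).+1.

Lemma Dplus_familyE (b : bool) p :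
  Dplus_family (b + p.*2) = if b then H p.+1 else D p.+1.
Proof. by rewrite /Dplus_family half_bit_double oddD odd_double addbF; case: b. Qed.

Lemma Dplus_family_ascending : ascending_brackets Dplus_family.
Proof.
have [DD DH' HH] := DH.
move=> i j; rewrite -(odd_double_half i) -(odd_double_half j).
move: (odd i) (i./2) (odd j) (j./2) => [] p [] q.
- exists (p.*2).+2, 0; rewrite !Dplus_familyE scale0r; split; first by lia.
  by apply/eqP; rewrite subr_eq0; apply/eqP/HH.
- exists (true + (p + q).+1.*2)%N, (- p.+1%:R).
  rewrite !Dplus_familyE; split; first by lia.
  rewrite -opprB DH' // scaleNr; congr (- (_ *: H _)); lia.
- exists (true + (p + q).+1.*2)%N, q.+1%:R.
  rewrite !Dplus_familyE; split; first by lia.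
  rewrite DH' //; congr (_ *: H _); lia.
- exists (false + (p + q).+1.*2)%N, (q.+1%:R - p.+1%:R).
  rewrite !Dplus_familyE; split; first by lia.
  rewrite DD //; congr (_ *: D _); lia.
Qed.

End DplusMatrices.

Theorem Dplus_antirep_common_eigenvector (F : numClosedFieldType) n
    (D H : nat -> 'M[F]_n) :
  (0 < n)%N -> Dplus_antirep D H ->
  exists2 v : 'rV_n, v != 0 & forall j, (0 < j)%N -> stablemx v (D j) /\ stablemx v (H j).
Proof.
move=> n_gt0 DH; have [N DHN] := Dplus_antirep_eventually_zero DH.
have [|v v_neq0 stab_v] := ascending_brackets_common_eigenvector (N := N.*2) n_gt0
  (Dplus_family_ascending DH).
  move=> i le_Ni; rewrite /Dplus_family.
  by have [-> ->] := DHN (i./2).+1 (ltac:(lia)); case: ifP.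
exists v => // -[//|j] _; have := stab_v (true + j.*2)%N; have := stab_v (false + j.*2)%N.
by rewrite !Dplus_familyE.
Qed.

Definition lincomb (F : fieldType) (M : lmodType F) (ws : seq M)
    (r : 'rV[F]_(size ws)) : M :=
  \sum_(i < size ws) r 0 i *: ws`_i.
Arguments lincomb {F M} ws r.

Section LinearImage.
Variables (F : fieldType) (M : lmodType F).

Fact lincomb_is_linear (ws : seq M) : linear (lincomb ws).
Proof.
move=> a r r'; rewrite /lincomb scaler_sumr -big_split; apply: eq_bigr => i _.
by rewrite !mxE scalerDl scalerA.
Qed.

HB.instance Definition _ (ws : seq M) :=
  GRing.isLinear.Build _ _ _ _ (lincomb ws) (@lincomb_is_linear ws).

Lemma in_spanE (ws : seq M) x : in_span ws x <-> exists r, x = lincomb ws r.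
Proof.
split=> [[a ->] | [r ->]]; last by exists (r 0).
by exists (\row_i a i); apply: eq_bigr => i _; rewrite mxE.
Qed.

Lemma lincomb_delta (ws : seq M) i : lincomb ws 'e_i = ws`_i.
Proof.
rewrite /lincomb (bigD1 i) //= big1 => [|j ji]; first by rewrite mxE !eqxx scale1r addr0.
by rewrite mxE (negbTE ji) andbF scale0r.
Qed.

Lemma linear_matrix_of_images p q (g : {linear 'rV[F]_p -> M})
    (h : {linear 'rV[F]_q -> M}) :
  (forall i : 'I_p, exists r, g 'e_i = h r) ->
  exists A : 'M_(p, q), forall s, g s = h (s *m A).
Proof.
move=> /fin_all_exists[a ga]; exists (\matrix_i a i) => s.
rewrite {1}(row_sum_delta s) mulmx_sum_row !linear_sum; apply: eq_bigr => i _.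
by rewrite !linearZ /= ga rowK.
Qed.

Lemma injective_reparametrization k (f : {linear 'rV[F]_k -> M}) :
  exists m (B : 'M[F]_(m, k)),
    (forall r, exists s, f r = f (s *m B)) /\ (forall s, f (s *m B) = 0 -> s = 0).
Proof.
suff: forall m (B : 'M[F]_(m, k)), (forall r, exists s, f r = f (s *m B)) ->
    exists m (B : 'M[F]_(m, k)),
      (forall r, exists s, f r = f (s *m B)) /\ (forall s, f (s *m B) = 0 -> s = 0).
  by move=> reparam; apply: (reparam k 1%:M) => r; exists r; rewrite mulmx1.
elim/ltn_ind => m IHm B spanB.
have [injB | /not_all_ex_not[s not_inj_s]] :=
  classic (forall s, f (s *m B) = 0 -> s = 0); first by exists m, B.
have [fsB0 /eqP s_neq0] := imply_to_and _ _ not_inj_s.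
(* A complement of the line of s still spans the image, with fewer rows. *)
apply: (IHm _ _ (row_base s^C%MS *m B)).
  rewrite mxrank_compl rank_rV s_neq0 subn1 prednK //.
  by case: m {IHm B spanB not_inj_s fsB0} s s_neq0 => // s; rewrite thinmx0 eqxx.
move=> r; have [t frt] := spanB r.
have /sub_addsmxP[[u u'] /= tE] : (t <= s + s^C)%MS by apply/submx_full/addsmx_compl_full.
have /submxP[w u'E] : (u' *m s^C <= row_base s^C)%MS by rewrite eq_row_base submxMl.
exists w; rewrite frt tE u'E mulmxDl linearD /= -mulmxA (mx11_scalar u) mul_scalar_mx.
by rewrite linearZ /= fsB0 scaler0 add0r mulmxA.
Qed.

Lemma stable_linear_matrix k (f : {linear 'rV[F]_k -> M}) m (B : 'M[F]_(m, k))
    (T : {linear M -> M}) :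
  (forall r, exists s, f r = f (s *m B)) ->
  (forall i : 'I_k, exists r, T (f 'e_i) = f r) ->
  exists A : 'M_m, forall s, T (f (s *m B)) = f (s *m A *m B).
Proof.
move=> spanB /(linear_matrix_of_images (g := T \o f))[A0 TA0].
apply: (linear_matrix_of_images (g := T \o f \o mulmxr B) (h := f \o mulmxr B)) => i.
by have [s fs] := spanB ('e_i *m B *m A0); exists s; apply: etrans (TA0 _) fs.
Qed.

Lemma injective_mx_eq m (phi : {linear 'rV[F]_m -> M}) (X Y : 'M[F]_m) :
  (forall s, phi s = 0 -> s = 0) -> (forall s, phi (s *m X) = phi (s *m Y)) -> X = Y.
Proof.
move=> inj_phi XY; apply/row_matrixP => i; rewrite !rowE; apply/eqP.
by rewrite -subr_eq0 -mulmxBr; apply/eqP/inj_phi; rewrite mulmxBr linearB /= XY subrr.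
Qed.

End LinearImage.

Section DbarModule.
Variables (F : fieldType) (M : lmodType F) (A : DbarModule M).

Lemma delta0_pos (k : int) : 0 < k -> delta0 F k = 0.
Proof. by move=> k_gt0; rewrite /delta0 gt_eqF. Qed.

Lemma Dplus_stable_line_whittaker (v : M) :
  simple_module A -> v != 0 -> Dplus_stable_line A v -> whittaker_module A.
Proof.
move=> [_ simpleA] v_neq0 stab_v.
have eigen_coef (T : int -> M -> M) : (forall k, 0 < k -> in_line v (T k v)) ->
    exists phi : int -> F, forall k, 0 < k -> T k v = phi k *: v.
  move=> line_T.
  apply: (ClassicalEpsilon.choice (fun k a => 0 < k -> T k v = a *: v)) => k.
  case: (boolP (0 < k)) => [/line_T[a ->] | /negP k_le0]; last by exists 0.
  by exists a.
have [phid hd] := eigen_coef (fun k => dop A k) (fun k k_gt0 => (stab_v k k_gt0).1).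
have [phih hh] := eigen_coef (fun k => hop A k) (fun k k_gt0 => (stab_v k k_gt0).2).
have coef_eq0 (c : F) : c *: v = 0 -> c = 0.
  by move/eqP; rewrite scaler_eq0 (negbTE v_neq0) orbF => /eqP.
exists v, phid, phih; split => //.
- split=> k l k_gt0 l_gt0; apply: coef_eq0; rewrite -scalerA.
    rewrite -hd ?addr_gt0 //; move: (dd_rel A k l v).
    rewrite delta0_pos ?addr_gt0 // mul0r scale0r addr0 => <-.
    by rewrite !hd // !linearZ /= !hd // scalerN !scalerA mulrC subrr.
  rewrite -hh ?addr_gt0 //; move: (dh_rel A k l v).
  rewrite delta0_pos ?addr_gt0 // mul0r scale0r addr0 => <-.
  by rewrite hh // hd // !linearZ /= hh // hd // scalerN !scalerA mulrC subrr.
- by move=> k k_gt0; split; [apply: hd | apply: hh].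
- by move=> S S_sub Sv x; apply: simpleA S_sub _ x; exists v.
Qed.

End DbarModule.

Section DbarMatrices.
Variables (F : numFieldType) (M : lmodType F) (A : DbarModule M).

Lemma Dplus_antirep_of_action m (phi : {linear 'rV[F]_m -> M}) (D H : nat -> 'M[F]_m) :
  (forall s, phi s = 0 -> s = 0) ->
  (forall j, (0 < j)%N -> forall s, dop A j (phi s) = phi (s *m D j)) ->
  (forall j, (0 < j)%N -> forall s, hop A j (phi s) = phi (s *m H j)) ->
  Dplus_antirep D H.
Proof.
move=> inj_phi hD hH; split=> a b a_gt0 b_gt0; apply: (injective_mx_eq inj_phi) => s.
- rewrite mulmxBr linearB /= !mulmxA.
  rewrite -(hD b) // -(hD a) // -(hD a) // -(hD b) //.
  rewrite -scalemxAr linearZ /= -hD ?addn_gt0 ?a_gt0 //.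
  rewrite dd_rel delta0_pos ?addr_gt0 ?ltz_nat // mul0r scale0r addr0 -PoszD addnC.
  by rewrite intrB.
- rewrite mulmxBr linearB /= !mulmxA.
  rewrite -(hD a) // -(hH b) // -(hH b) // -(hD a) //.
  rewrite -scalemxAr linearZ /= -hH ?addn_gt0 ?a_gt0 //.
  rewrite -opprB dh_rel delta0_pos ?addr_gt0 ?ltz_nat // mul0r scale0r addr0 -PoszD.
  by rewrite -scaleNr intrN opprK.
- rewrite !mulmxA -(hH a) // -(hH b) // -(hH b) // -(hH a) //.
  apply/eqP; rewrite -subr_eq0 hh_rel delta0_pos ?addr_gt0 ?ltz_nat //.
  by rewrite mulr0 scale0r.
Qed.

End DbarMatrices.

Section DbarLocallyFinite.
Variables (F : numClosedFieldType) (M : lmodType F) (A : DbarModule M).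

Lemma Dplus_locally_finite_stable_line :
  Dplus_locally_finite A -> forall x : M, x != 0 ->
  exists v : M, v != 0 /\ Dplus_stable_line A v.
Proof.
move=> LF x x_neq0; have [ws [/in_spanE[r xE] ws_stable]] := LF x.
have [m [B [spanB inj_phi]]] := injective_reparametrization (lincomb ws).
pose phi : {linear 'rV[F]_m -> M} := lincomb ws \o mulmxr B.
have op_mx (T : nat -> {linear M -> M}) :
    (forall j, (0 < j)%N -> forall w, w \in ws -> in_span ws (T j w)) ->
    exists X : nat -> 'M_m, forall j, (0 < j)%N -> forall s, T j (phi s) = phi (s *m X j).
  move=> T_stable; apply: (ClassicalEpsilon.choice
    (fun j X => (0 < j)%N -> forall s, T j (phi s) = phi (s *m X))) => j.
  case: (posnP j) => [-> | j_gt0]; first by exists 0.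
  have [i | X hX] := stable_linear_matrix (T := T j) spanB; last by exists X.
  have /in_spanE[r' Tw] := T_stable j j_gt0 _ (mem_nth 0 (ltn_ord i)).
  by exists r'; apply: etrans Tw; congr (T j _); exact: lincomb_delta.
have [D hD] := op_mx (fun j => dop A j)
  (fun j j_gt0 w w_ws => (ws_stable w w_ws j j_gt0).1).
have [H hH] := op_mx (fun j => hop A j)
  (fun j j_gt0 w w_ws => (ws_stable w w_ws j j_gt0).2).
have m_gt0 : (0 < m)%N.
  have [s xs] := spanB r; rewrite lt0n; apply: contra x_neq0 => /eqP m0.
  have s0 : s = 0 by apply/rowP => i; have := ltn_ord i; lia.
  by rewrite xE xs s0 mul0mx linear0.
have DH := Dplus_antirep_of_action (phi := phi) inj_phi hD hH.
have [v v_neq0 stab_v] := Dplus_antirep_common_eigenvector m_gt0 DH.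
exists (phi v); split; first by apply: contra v_neq0 => /eqP/inj_phi ->.
case=> [j|//] j_gt0; have [/sub_rVP[a va] /sub_rVP[b vb]] := stab_v j j_gt0.
by split; [exists a; rewrite hD // va | exists b; rewrite hH // vb]; rewrite linearZ.
Qed.

End DbarLocallyFinite.

Local Open Scope complex_scope.

Theorem theorem5p9 (R : realType) (M : lmodType R[i]) (A : DbarModule M) :
  Dplus_locally_finite A ->
  ((exists x : M, x != 0) ->
     exists v : M, v != 0 /\ Dplus_stable_line A v)
  /\ (simple_module A -> whittaker_module A \/ highest_weight_module A).
Proof.
move=> LF; have stable_line := Dplus_locally_finite_stable_line LF.
split=> [[x x_neq0] | simpleA]; first exact: stable_line x_neq0.
have [x x_neq0] := simpleA.1; have [v [v_neq0 stab_v]] := stable_line x x_neq0.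
(* A highest weight vector is a Whittaker vector with phi = 0. *)
by left; apply: Dplus_stable_line_whittaker stab_v.
Qed.
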